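(* Let $q\in\mathbb{C}$ with $|q|<1$ and let $k,l\ge0$ be integers. Then for $x\in[0,1]$, $$B_{k,l}(x,q)=\frac{k!}{[k]_q!}x^k\sum_{m=0}^l\frac{[m]_q!}{m!}S(m,k)\,\beta_{l-m}^{(k)}((1-x)_q,q)\binom{l}{m}_q.$$
   Context: For a number $x$, $[x]_q=\frac{1-q^x}{1-q}$; $[n]_q!=[n]_q\cdots[1]_q$, $[0]_q!=1$; $\binom{n}{k}_q=\frac{[n]_q!}{[k]_q![n-k]_q!}$ for $0\le k\le n$ and $0$ for $k>n$. $(1-b)_q^n=\prod_{i=1}^n(1-bq^{i-1})$. $B_{k,n}(x,q)=\binom{n}{k}_q x^k(1-x)_q^{n-k}$ if $n\ge k$ and $0$ if $n<k$. $S(m,k)$ are the Stirling numbers of the second kind: $\frac{(e^t-1)^k}{k!}=\sum_{m\ge0}S(m,k)\frac{t^m}{m!}$. $B_m^{(k)}$ are the Bernoulli numbers of order $k$: $\left(\frac{t}{e^t-1}\right)^k=\sum_{m\ge0}B_m^{(k)}\frac{t^m}{m!}$. The $q$-Bernoulli polynomials of order $k$ are defined by $\left(\frac{z}{e^z-1}\right)^k e_q(zy)=\sum_{n\ge0}\beta_n^{(k)}(y,q)\frac{z^n}{[n]_q!}$, where $e_q(zy)=\sum_{j\ge0}\frac{y^jz^j}{[j]_q!}$, so $\beta_n^{(k)}(y,q)=\sum_{m=0}^n\binom{n}{m}_q\frac{[m]_q!}{m!}B_m^{(k)}y^{n-m}$. The symbol $\beta_n^{(k)}((1-x)_q,q)$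 is understood umbrally, i.e. each power $y^{j}$ is replaced by $(1-x)_q^{j}$: $\beta_n^{(k)}((1-x)_q,q)=\sum_{m=0}^n\binom{n}{m}_q\frac{[m]_q!}{m!}B_m^{(k)}(1-x)_q^{n-m}$ (equivalently, $\left(\frac{t}{e^t-1}\right)^k\sum_{j\ge0}\frac{(1-x)_q^jt^j}{[j]_q!}=\sum_{n\ge0}\beta_n^{(k)}((1-x)_q,q)\frac{t^n}{[n]_q!}$ as formal power series). *)

From mathcomp Require Import all_boot all_order all_algebra.
From mathcomp Require Import reals.
From mathcomp Require Export complex.
Set Implicit Arguments.
Unset Strict Implicit.
Unset Printing Implicit Defensive.
Import Order.TTheory GRing.Theory Num.Theory.
Local Open Scope ring_scope.

Section QDefs.
Variable F : fieldType.

Definition qint (q : F) (n : nat) : F := (1 - q ^+ n) / (1 - q).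

Definition qfact (q : F) (n : nat) : F := \prod_(i < n) qint q i.+1.

Definition qbinom (q : F) (n k : nat) : F :=
  if (k <= n)%N then qfact q n / (qfact q k * qfact q (n - k)) else 0.

(* (1 - b)_q^n = prod_{i=1}^n (1 - b q^(i-1)) *)
Definition qpoch (b q : F) (n : nat) : F := \prod_(i < n) (1 - b * q ^+ i).

Definition qBernstein (k n : nat) (x q : F) : F :=
  if (k <= n)%N then qbinom q n k * x ^+ k * qpoch x q (n - k) else 0.

(* Stirling numbers of the second kind: S(m,k) is the coefficient of t^m/m!
   in (e^t - 1)^k / k!, i.e. (1/k!) sum_{j=0}^k (-1)^(k-j) C(k,j) j^m. *)
Definition stirling2 (m k : nat) : F :=
  (k`!%:R)^-1 * \sum_(j < k.+1) (-1) ^+ (k - j) * ('C(k, j))%:R * (j%:R) ^+ m.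

(* Coefficients a_n of the power series t/(e^t - 1) = sum_n a_n t^n, defined as
   the multiplicative inverse of (e^t - 1)/t = sum_j t^j/(j+1)!:
   a_0 = 1, a_n = - sum_{j<n} a_j / (n-j+1)!. *)
Fixpoint bern_seq (n : nat) : seq F :=
  match n with
  | 0 => [::]
  | n'.+1 =>
      let s := bern_seq n' in
      rcons s (if n' == 0%N then 1
               else - \sum_(j < n') s`_j / ((n' - j).+1`!)%:R)
  end.

Definition bern_coef (n : nat) : F := (bern_seq n.+1)`_n.

(* Bernoulli numbers of order k: (t/(e^t-1))^k = sum_m B_m^(k) t^m/m!.
   The coefficient of t^m in the k-th power only depends on the first m+1
   coefficients, so we compute it from the truncation to degree m. *)
Definition bernoulli_order (k m : nat) : F :=
  (m`!)%:R * ((\poly_(i < m.+1) bern_coef i) ^+ k)`_m.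

(* beta_n^(k)((1-x)_q, q), umbral reading:
   sum_{m=0}^n binom(n,m)_q [m]_q!/m! B_m^(k) (1-x)_q^(n-m) *)
Definition qbeta_umbral (k n : nat) (x q : F) : F :=
  \sum_(m < n.+1) qbinom q n m * (qfact q m / (m`!)%:R) *
                  bernoulli_order k m * qpoch x q (n - m).

End QDefs.

(* Work with formal power series truncated at degree N = l + 1, where a
   series is represented by a polynomial up to [take_poly N].  Writing
   B(t) = t/(e^t-1) and P(t) = sum_i (1-x)_q^i t^i / [i]_q!, the umbral
   q-Bernoulli numbers are beta_n^(k) = [n]_q! [t^n] B^k P, while
   S(m,k)/m! = [t^m] (e^t-1)^k/k!.  The right-hand side of the theorem is
   therefore k!/[k]_q! x^k [l]_q! [t^l] ((e^t-1)^k/k! B^k P), and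
   ((e^t-1) B)^k = t^k collapses it to the q-Bernstein polynomial. *)

From mathcomp Require Import all_boot all_order all_algebra.
From mathcomp Require Import reals complex.
From mathcomp Require Import ring.
Set Implicit Arguments.
Unset Strict Implicit.
Unset Printing Implicit Defensive.
Import Order.TTheory GRing.Theory Num.Theory.
Local Open Scope ring_scope.

Section TruncatedSeries.
Variable F : fieldType.
Implicit Types p r : {poly F}.

Lemma take_polyM N p p' r r' :
  take_poly N p = take_poly N p' -> take_poly N r = take_poly N r' ->
  take_poly N (p * r) = take_poly N (p' * r').
Proof.
rewrite !Pdiv.IdomainMonic.take_poly_modp => ep er.
rewrite -modp_mul er modp_mul [p * _]mulrC [p' * _]mulrC.
by rewrite -modp_mul ep modp_mul.
Qed.

Lemma take_polyX N p p' k : take_poly N p = take_poly N p' ->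
  take_poly N (p ^+ k) = take_poly N (p' ^+ k).
Proof.
move=> ep; elim: k => [|k IHk]; first by rewrite !expr0.
by rewrite !exprS; apply: take_polyM.
Qed.

Lemma eq_take_poly N p r : (forall i, (i < N)%N -> p`_i = r`_i) ->
  take_poly N p = take_poly N r.
Proof.
by move=> epr; apply/polyP=> i; rewrite !coef_take_poly; case: ifP => // /epr.
Qed.

Lemma coef_take_polyE N p r i : take_poly N p = take_poly N r -> (i < N)%N ->
  p`_i = r`_i.
Proof.
move=> /(congr1 (fun s : {poly F} => s`_i)) /= + iN.
by rewrite !coef_take_poly iN.
Qed.

End TruncatedSeries.

Section ExponentialGeneratingSeries.
Variable F : numFieldType.

Lemma natr_fact_neq0 n : (n`!)%:R != 0 :> F.
Proof. by rewrite pnatr_eq0 -lt0n fact_gt0. Qed.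

Definition exp_series N (a : F) : {poly F} := \poly_(i < N) (a ^+ i / (i`!)%:R).

Definition expm1_divX_series N : {poly F} := \poly_(i < N) ((i.+1)`!%:R)^-1.

Definition bernoulli_series N : {poly F} := \poly_(i < N) bern_coef F i.

Definition stirling2_series N k : {poly F} :=
  \poly_(i < N) (stirling2 F i k / (i`!)%:R).

Lemma exp_seriesD N a b : take_poly N (exp_series N a * exp_series N b) =
                          take_poly N (exp_series N (a + b)).
Proof.
apply: eq_take_poly => i iN; rewrite coefMr coef_poly iN exprDn mulr_suml.
apply: eq_bigr => j _; have ji : (j <= i)%N by rewrite -ltnS.
rewrite !coef_poly (leq_ltn_trans ji iN) (leq_ltn_trans (leq_subr _ _) iN).
rewrite -[_ *+ 'C(i, j)]mulr_natr -(bin_fact ji) !natrM.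
have binN : ('C(i, j))%:R != 0 :> F by rewrite pnatr_eq0 -lt0n bin_gt0.
by field; rewrite !natr_fact_neq0 binN.
Qed.

Lemma exp_series_natr N j :
  take_poly N (exp_series N 1 ^+ j) = take_poly N (exp_series N j%:R).
Proof.
elim: j => [|j IHj].
  apply: eq_take_poly => i iN; rewrite expr0 coefC coef_poly iN.
  by case: i {iN} => [|i]; rewrite ?fact0 ?divr1 // expr0n mul0r.
by rewrite exprSr -natr1 -exp_seriesD; apply: take_polyM.
Qed.

Lemma X_expm1_divX_series N :
  take_poly N ('X * expm1_divX_series N) = take_poly N (exp_series N 1 - 1).
Proof.
apply: eq_take_poly => i iN; rewrite coefXM coefB !coef_poly coefC iN expr1n.
case: i iN => [|i] iN /=; first by rewrite fact0 divr1 subrr.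
by rewrite (ltn_trans (ltnSn i) iN) mul1r subr0.
Qed.

Lemma size_bern_seq n : size (bern_seq F n) = n.
Proof. by elim: n => //= n IHn; rewrite size_rcons IHn. Qed.

Lemma nth_bern_seq n j : (j < n)%N -> (bern_seq F n)`_j = bern_coef F j.
Proof.
elim: n => // n IHn; rewrite ltnS leq_eqVlt => /predU1P[-> //|jn].
by rewrite /= nth_rcons size_bern_seq jn IHn.
Qed.

Lemma bern_coef_rec n : (0 < n)%N ->
  bern_coef F n = - \sum_(j < n) bern_coef F j / ((n - j).+1`!)%:R.
Proof.
move=> n_gt0; rewrite {1}/bern_coef /= nth_rcons size_bern_seq ltnn eqxx.
case: n n_gt0 => // n _.
by congr (- _); apply: eq_bigr => j _; rewrite nth_bern_seq.
Qed.

Lemma bernoulli_seriesK N :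
  take_poly N (bernoulli_series N * expm1_divX_series N) = take_poly N 1.
Proof.
apply: eq_take_poly => n nN; rewrite coefC coefM big_ord_recr /= subnn.
rewrite !coef_poly nN (leq_ltn_trans (leq0n n) nN) invr1 mulr1.
case: n nN => [|n] nN; first by rewrite big_ord0 add0r.
rewrite /= (@bern_coef_rec n.+1) //; apply/eqP; rewrite subr_eq0; apply/eqP.
apply: eq_bigr => j _; have jn := ltn_ord j.
rewrite !coef_poly (ltn_trans jn nN).
by rewrite (leq_ltn_trans _ nN) // leq_subLR leq_addl.
Qed.

Lemma coef_expm1_series N k m : (m < N)%N ->
  ((exp_series N 1 - 1) ^+ k)`_m = k`!%:R * (stirling2 F m k / m`!%:R).
Proof.
move=> mN; rewrite addrC exprDn coef_sum /stirling2.
rewrite !mulrA mulfV ?natr_fact_neq0 // mul1r mulr_suml.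
apply: eq_bigr => j _.
rewrite coefMn -polyCN -rmorphXn coefCM.
rewrite (coef_take_polyE (exp_series_natr N j) mN) coef_poly mN.
by rewrite -mulr_natr; ring.
Qed.

Lemma stirling2_bernoulli_series N k :
  take_poly N (stirling2_series N k * bernoulli_series N ^+ k) =
  take_poly N ((k`!)%:R^-1 *: 'X^k).
Proof.
have Sk : take_poly N ((k`!)%:R *: stirling2_series N k) =
          take_poly N (('X * expm1_divX_series N) ^+ k).
  rewrite (take_polyX k (X_expm1_divX_series N)).
  by apply: eq_take_poly => j jN; rewrite coefZ coef_poly jN coef_expm1_series.
have EBk : take_poly N ((expm1_divX_series N * bernoulli_series N) ^+ k) =
           take_poly N (1 ^+ k).
  by apply: take_polyX; rewrite mulrC bernoulli_seriesK.
have SBk : take_poly N ((k`!)%:R *: (stirling2_series N k * bernoulli_series N ^+ k))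
           = take_poly N ('X^k).
  rewrite scalerAl (take_polyM Sk (erefl (take_poly N (bernoulli_series N ^+ k)))).
  rewrite exprMn -mulrA -exprMn -[in RHS](mulr1 'X^k) -(expr1n _ k).
  exact: take_polyM.
by rewrite -[_ * _](scalerK (natr_fact_neq0 k)) [LHS]take_polyZ SBk take_polyZ.
Qed.

End ExponentialGeneratingSeries.

Section QBernsteinExpansion.
Variables (F : numFieldType) (q : F).
Hypothesis qfact_neq0 : forall n, qfact q n != 0.

Definition qpoch_series N (y : F) : {poly F} :=
  \poly_(i < N) (qpoch y q i / qfact q i).

Lemma bernoulli_order_coef N k m : (m < N)%N ->
  bernoulli_order F k m = m`!%:R * (bernoulli_series F N ^+ k)`_m.
Proof.
move=> mN; congr (_ * _); apply: coef_take_polyE (ltnSn m); apply: take_polyX.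
by apply: eq_take_poly => i im; rewrite !coef_poly im (leq_trans im mN).
Qed.

Lemma qbeta_umbral_coef N k n y : (n < N)%N ->
  qbeta_umbral k n y q =
  qfact q n * (bernoulli_series F N ^+ k * qpoch_series N y)`_n.
Proof.
move=> nN; rewrite /qbeta_umbral coefM mulr_sumr; apply: eq_bigr => j _.
have jn : (j <= n)%N by rewrite -ltnS.
rewrite /qbinom jn (bernoulli_order_coef k (leq_ltn_trans jn nN)).
rewrite coef_poly (leq_ltn_trans (leq_subr _ _) nN).
by field; rewrite !qfact_neq0 natr_fact_neq0.
Qed.

Lemma stirling2_qbeta_sum k l y :
  \sum_(m < l.+1) (qfact q m / (m`!)%:R) * stirling2 F m k *
                  qbeta_umbral k (l - m) y q * qbinom q l m =
  qfact q l * (stirling2_series F l.+1 k *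
               (bernoulli_series F l.+1 ^+ k * qpoch_series l.+1 y))`_l.
Proof.
rewrite coefM mulr_sumr; apply: eq_bigr => m _.
have ml : (m <= l)%N by rewrite -ltnS.
rewrite (@qbeta_umbral_coef l.+1) ?ltnS ?leq_subr // /qbinom ml coef_poly ltn_ord.
by field; rewrite !qfact_neq0 natr_fact_neq0.
Qed.

Lemma qBernstein_stirling2_qbeta k l y :
  qBernstein k l y q =
    (k`!)%:R / qfact q k * y ^+ k *
    \sum_(m < l.+1) (qfact q m / (m`!)%:R) * stirling2 F m k *
                    qbeta_umbral k (l - m) y q * qbinom q l m.
Proof.
rewrite stirling2_qbeta_sum mulrA.
have /coef_take_polyE -> // := take_polyM (stirling2_bernoulli_series F l.+1 k)
  (erefl (take_poly l.+1 (qpoch_series l.+1 y))).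
rewrite -scalerAl coefZ coefXnM /qBernstein ltnNge.
case: leqP => kl; last by rewrite !mulr0.
rewrite /= coef_poly ltnS leq_subr /qbinom kl.
by field; rewrite !qfact_neq0 natr_fact_neq0.
Qed.

End QBernsteinExpansion.

Lemma qfact_neq0_norm_lt1 (F : numFieldType) (q : F) n :
  `|q| < 1 -> qfact q n != 0.
Proof.
move=> q_lt1; have qXn_neq1 m : (0 < m)%N -> q ^+ m != 1.
  move=> m_gt0; apply: contraTneq q_lt1 => qm1; apply/negP => q_lt1.
  have := exprn_ilt1 m (normr_ge0 q) q_lt1.
  by rewrite -normrX qm1 normr1 ltxx -lt0n m_gt0.
apply/prodf_neq0 => i _; rewrite mulf_neq0 ?invr_eq0 // subr_eq0 eq_sym.
  exact: qXn_neq1.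
by rewrite -[q]expr1 qXn_neq1.
Qed.

Local Open Scope complex_scope.

Theorem theorem10 (R : realType) (q : R[i]) (k l : nat) (x : R) :
  `|q| < 1 -> 0 <= x <= 1 ->
  qBernstein k l x%:C q =
    (k`!)%:R / qfact q k * (x%:C) ^+ k *
    \sum_(m < l.+1) (qfact q m / (m`!)%:R) * stirling2 _ m k *
                    qbeta_umbral k (l - m) x%:C q * qbinom q l m.
Proof.
move=> q_lt1 _; apply: qBernstein_stirling2_qbeta => n.
exact: qfact_neq0_norm_lt1.
Qed.
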